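(* Let $N\subset\mathbb{R}^3$ be an open set with coordinates $(t,x,y)$ and metric $g_f^{\varepsilon}=\varepsilon\,dx^2+f(x,y)\,dy^2+2\,dt\,dy$ ($\varepsilon=\pm1$, $f$ smooth), with orthonormal frame $$e_1=\partial_x,\quad e_2=\tfrac{2-f}{2\sqrt2}\partial_t+\tfrac1{\sqrt2}\partial_y,\quad e_3=\tfrac{2+f}{2\sqrt2}\partial_t-\tfrac1{\sqrt2}\partial_y,$$ so that $\langle e_1,e_1\rangle=\varepsilon$, $\langle e_2,e_2\rangle=1$, $\langle e_3,e_3\rangle=-1$. Let $\Sigma\subset N$ be a non-degenerate totally umbilical surface with unit normal $\mathcal{V}=v_1e_1+v_2e_2+v_3e_3$, where $v_i\in C^\infty(\Sigma)$ and $\varepsilon v_1^2+v_2^2-v_3^2=\delta=\pm1$, and assume $v_1\neq0$ on $\Sigma$. Let $\lambda\in C^\infty(\Sigma)$ satisfy $-\overline{\nabla}_T\mathcal{V}=\lambda T$ for all $T\in T\Sigma$, and let $\nabla\lambda$ denote the gradient of $\lambda$ on $\Sigma$ with respect to the induced metric. Then $$\langle\nabla\lambda,e_1\rangle=\delta\frac{f_{xx}v_1(v_2-v_3)^2}{4},$$ $$\langle\nabla\lambda,e_2\rangle=\delta\frac{f_{xx}(v_3-v_2)}{4}\bigl(v_1^2+\varepsilon v_3(v_2-v_3)\bigr),$$ $$\langle\nabla\lambda,e_3\rangle=\delta\frac{f_{xx}(v_2-v_3)}{4}\bigl(v_1^2+\varepsilon v_2(v_2-v_3)\bigr).$$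
   Context: $\overline{\nabla}$ denotes the Levi-Civita connection of $g_f^{\varepsilon}$, and $\langle\cdot,\cdot\rangle$ denotes both $g_f^\varepsilon$ and the induced metric on $\Sigma$. A surface is non-degenerate if its induced metric is Riemannian or Lorentzian. *)

From Stdlib Require Import Reals Lra List.
From Coquelicot Require Import Coquelicot.
Open Scope R_scope.

(** Points of R^2 (parameter domain of the surface, and the (x,y)-plane). *)
Definition R2 := (R * R)%type.
(** Points of R^3 written as (t, (x, y)). *)
Definition R3 := (R * (R * R))%type.

(** Coordinates of a point of R^3: 0 = t, 1 = x, 2 = y. *)
Definition coord (k : nat) (p : R3) : R :=
  match k with
  | 0%nat => fst p
  | 1%nat => fst (snd p)
  | _ => snd (snd p)
  end.

Definition shift3 (k : nat) (s : R) (p : R3) : R3 :=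
  match k with
  | 0%nat => (fst p + s, snd p)
  | 1%nat => (fst p, (fst (snd p) + s, snd (snd p)))
  | _ => (fst p, (fst (snd p), snd (snd p) + s))
  end.

Definition pd3 (k : nat) (h : R3 -> R) (p : R3) : R :=
  Derive (fun s => h (shift3 k s p)) 0.

(** Partial derivatives on R^2: [true] = first variable, [false] = second. *)
Definition pd2 (i : bool) (h : R2 -> R) (q : R2) : R :=
  if i then Derive (fun s => h (s, snd q)) (fst q)
  else Derive (fun s => h (fst q, s)) (snd q).

Fixpoint iter_pd2 (l : list bool) (h : R2 -> R) : R2 -> R :=
  match l with
  | nil => h
  | i :: l' => pd2 i (iter_pd2 l' h)
  end.

Definition smooth2 (U : R2 -> Prop) (h : R2 -> R) : Prop :=
  forall (l : list bool) (q : R2), U q ->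
    continuous (iter_pd2 l h) q /\
    ex_derive (fun s => iter_pd2 l h (s, snd q)) (fst q) /\
    ex_derive (fun s => iter_pd2 l h (fst q, s)) (snd q).

Definition sum3 (F : nat -> R) : R := F 0%nat + F 1%nat + F 2%nat.

(** Vectors of R^3 (components in the coordinate basis d_t, d_x, d_y). *)
Definition vec3 := nat -> R.

Section Metric.
Variables (eps : R) (f : R2 -> R).

Definition gmet (p : R3) (i j : nat) : R :=
  match i, j with
  | 1%nat, 1%nat => eps
  | 2%nat, 2%nat => f (snd p)
  | 0%nat, 2%nat => 1
  | 2%nat, 0%nat => 1
  | _, _ => 0
  end.

(** Its inverse matrix (for eps = +-1): g^{tt} = -f, g^{xx} = 1/eps, g^{ty} = 1. *)
Definition ginv (p : R3) (i j : nat) : R :=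
  match i, j with
  | 0%nat, 0%nat => - f (snd p)
  | 1%nat, 1%nat => / eps
  | 0%nat, 2%nat => 1
  | 2%nat, 0%nat => 1
  | _, _ => 0
  end.

Definition christoffel (p : R3) (k i j : nat) : R :=
  / 2 * sum3 (fun l => ginv p k l *
    (pd3 i (fun p' => gmet p' j l) p + pd3 j (fun p' => gmet p' i l) p
     - pd3 l (fun p' => gmet p' i j) p)).

Definition gdot (p : R3) (a b : vec3) : R :=
  sum3 (fun i => sum3 (fun j => gmet p i j * a i * b j)).

Definition e1 (p : R3) : vec3 := fun k =>
  match k with 1%nat => 1 | _ => 0 end.
Definition e2 (p : R3) : vec3 := fun k =>
  match k with
  | 0%nat => (2 - f (snd p)) / (2 * sqrt 2)
  | 1%nat => 0
  | _ => 1 / sqrt 2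
  end.
Definition e3 (p : R3) : vec3 := fun k =>
  match k with
  | 0%nat => (2 + f (snd p)) / (2 * sqrt 2)
  | 1%nat => 0
  | _ => - (1 / sqrt 2)
  end.

Definition fxx (q : R2) : R := pd2 true (pd2 true f) q.

End Metric.

Section Surface.
(** A surface given by a local parametrization X : U (open in R^2) -> N. *)
Variables (eps : R) (f : R2 -> R) (X : R2 -> R3).

Definition Xc (k : nat) (q : R2) : R := coord k (X q).
Definition Xu (q : R2) : vec3 := fun k => pd2 true (Xc k) q.
Definition Xw (q : R2) : vec3 := fun k => pd2 false (Xc k) q.

Definition h11 q := gdot eps f (X q) (Xu q) (Xu q).
Definition h12 q := gdot eps f (X q) (Xu q) (Xw q).
Definition h22 q := gdot eps f (X q) (Xw q) (Xw q).
Definition hdet q := h11 q * h22 q - h12 q * h12 q.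

Definition tang (a b : R) (q : R2) : vec3 := fun k => a * Xu q k + b * Xw q k.

Definition frame_field (v1 v2 v3 : R2 -> R) (q : R2) : vec3 := fun k =>
  v1 q * e1 (X q) k + v2 q * e2 f (X q) k + v3 q * e3 f (X q) k.

Definition covD (V : R2 -> vec3) (a b : R) (q : R2) : vec3 := fun k =>
  Derive (fun s => V (fst q + s * a, snd q + s * b) k) 0
  + sum3 (fun i => sum3 (fun j =>
      christoffel eps f (X q) k i j * tang a b q i * V q j)).

Definition grad (lam : R2 -> R) (q : R2) : vec3 := fun k =>
  let lu := pd2 true lam q in
  let lw := pd2 false lam q in
  let D := hdet q in
  (h22 q / D * lu - h12 q / D * lw) * Xu q k
  + (- h12 q / D * lu + h11 q / D * lw) * Xw q k.

End Surface.

From Stdlib Require Import Reals Lra FunctionalExtensionality.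
From Coquelicot Require Import Coquelicot.
Open Scope R_scope.

(* Among the Christoffel symbols of g_f^eps in the coordinates (t, x, y), the only one
   entering the x- and y-components of the connection is Gamma^x_yy = - f_x / (2 eps);
   Gamma^y vanishes identically.  Writing V^y = (v2 - v3) / sqrt 2 for the dy-component
   of the normal, the y- and x-components of - nabla-bar_T V = lam T read, along Sigma,
     dV^y = - lam dy,        dv1 = (f_x V^y / (2 eps)) dy - lam dx.
   Differentiating once more (symmetry of second derivatives) gives dlam /\ dy = 0 and
   dlam /\ dx = (f_xx V^y / (2 eps)) dx /\ dy on Sigma.  Where V^y <> 0, dx /\ dy does not
   vanish on T Sigma (V is normal and the induced metric is non-degenerate), so
   dlam = K dy with K = - f_xx V^y / (2 eps).  On an open set where V^y = 0, lam vanishes: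
   otherwise dy = 0 there, normality and v1 <> 0 force dx = 0, and the induced metric would
   be degenerate.  By continuity dlam = K dy on all of Sigma.  Finally dy = <d_t, .>, so
   grad lam is the tangential part K (d_t - V^y V / <V, V>) of K d_t, and pairing it with
   e1, e2, e3 gives the three formulas. *)

(** * Partial derivatives in the parameter plane *)

Definition coord_line (i : bool) (q : R2) (s : R) : R2 :=
  if i then (s, snd q) else (fst q, s).
Definition coord_at (i : bool) (q : R2) : R := if i then fst q else snd q.

Lemma coord_line_at i q : coord_line i q (coord_at i q) = q.
Proof. now destruct i, q. Qed.

Lemma pd2_Derive i g q : pd2 i g q = Derive (fun s => g (coord_line i q s)) (coord_at i q).
Proof. now destruct i. Qed.

Lemma locally_coord_line i q (P : R2 -> Prop) :
  locally q P -> locally (coord_at i q) (fun s => P (coord_line i q s)).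
Proof.
  intros [e He]; exists e; intros s Hs; apply He.
  destruct i; split; simpl; easy || apply ball_center.
Qed.

Lemma pd2_ext_loc i g h q : locally q (fun z => g z = h z) -> pd2 i g q = pd2 i h q.
Proof.
  intros E; rewrite !pd2_Derive; apply Derive_ext_loc.
  exact (locally_coord_line i q _ E).
Qed.

Lemma pd2_ext_on (U : R2 -> Prop) i g h q : open U -> U q ->
  (forall z, U z -> g z = h z) -> pd2 i g q = pd2 i h q.
Proof. intros HU Hq E; apply pd2_ext_loc; exact (filter_imp U _ E (HU q Hq)). Qed.

Lemma pd2_locally0 i g q : locally q (fun z => g z = 0) -> pd2 i g q = 0.
Proof. intros E; rewrite (pd2_ext_loc i g (fun _ => 0) q E), pd2_Derive; apply Derive_const. Qed.

Definition is_pd2 (i : bool) (g : R2 -> R) (q : R2) (l : R) : Prop :=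
  is_derive (fun s => g (coord_line i q s)) (coord_at i q) l.

Lemma is_pd2_unique i g q l : is_pd2 i g q l -> pd2 i g q = l.
Proof. rewrite pd2_Derive; apply is_derive_unique. Qed.

Lemma is_pd2_const i c q : is_pd2 i (fun _ => c) q 0.
Proof. exact (is_derive_const (K := R_AbsRing) c (coord_at i q)). Qed.

Lemma is_pd2_minus i g h q dg dh : is_pd2 i g q dg -> is_pd2 i h q dh ->
  is_pd2 i (fun z => g z - h z) q (dg - dh).
Proof. apply (is_derive_minus (V := R_NormedModule)). Qed.

Lemma is_pd2_plus i g h q dg dh : is_pd2 i g q dg -> is_pd2 i h q dh ->
  is_pd2 i (fun z => g z + h z) q (dg + dh).
Proof. apply (is_derive_plus (V := R_NormedModule)). Qed.

Lemma is_pd2_mult i g h q dg dh : is_pd2 i g q dg -> is_pd2 i h q dh ->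
  is_pd2 i (fun z => g z * h z) q (dg * h q + g q * dh).
Proof.
  intros Hg Hh; rewrite <- (coord_line_at i q) at 2 3.
  apply (is_derive_mult _ _ _ _ _ Hg Hh); intros; apply Rmult_comm.
Qed.

Lemma is_pd2_scal i c g q dg : is_pd2 i g q dg -> is_pd2 i (fun z => c * g z) q (c * dg).
Proof.
  intros Hg; replace (c * dg) with (0 * g q + c * dg) by ring.
  exact (is_pd2_mult i _ _ q _ _ (is_pd2_const i c q) Hg).
Qed.

Lemma iter_pd2_app l1 l2 g : iter_pd2 l1 (iter_pd2 l2 g) = iter_pd2 (l1 ++ l2) g.
Proof. induction l1 as [|i l IH]; simpl; congruence. Qed.

Lemma smooth2_iter U l g : smooth2 U g -> smooth2 U (iter_pd2 l g).
Proof. intros Hg l' q Hq; rewrite iter_pd2_app; auto. Qed.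

Lemma smooth2_pd2 U i g : smooth2 U g -> smooth2 U (pd2 i g).
Proof. exact (smooth2_iter U (i :: nil) g). Qed.

Lemma smooth2_continuous U g q : smooth2 U g -> U q -> continuous g q.
Proof. intros Hg Hq; exact (proj1 (Hg nil q Hq)). Qed.

Lemma smooth2_ex_derive U i g q : smooth2 U g -> U q ->
  ex_derive (fun s => g (coord_line i q s)) (coord_at i q).
Proof. intros Hg Hq; destruct (Hg nil q Hq) as (_ & ? & ?); now destruct i. Qed.

Lemma smooth2_is_pd2 U i g q : smooth2 U g -> U q -> is_pd2 i g q (pd2 i g q).
Proof.
  intros Hg Hq; unfold is_pd2; rewrite pd2_Derive.
  exact (Derive_correct _ _ (smooth2_ex_derive U i g q Hg Hq)).
Qed.

Lemma smooth2_lin U a b g h : open U -> smooth2 U g -> smooth2 U h ->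
  smooth2 U (fun z => a * g z + b * h z).
Proof.
  intros HU Hg Hh.
  assert (E : forall l z, U z -> iter_pd2 l (fun z => a * g z + b * h z) z
                               = a * iter_pd2 l g z + b * iter_pd2 l h z).
  { induction l as [|i l IH]; intros z Hz; [reflexivity|]; simpl.
    rewrite (pd2_ext_on U i _ _ z HU Hz IH).
    apply is_pd2_unique, is_pd2_plus; apply is_pd2_scal;
      apply (smooth2_is_pd2 U); auto using smooth2_iter. }
  intros l q Hq.
  assert (Eq : locally q (fun z => a * iter_pd2 l g z + b * iter_pd2 l h z
                                  = iter_pd2 l (fun z => a * g z + b * h z) z)).
  { apply (filter_imp U); [intros z Hz; symmetry; auto | exact (HU q Hq)]. }
  assert (D : forall i, ex_derive
      (fun s => iter_pd2 l (fun z => a * g z + b * h z) (coord_line i q s)) (coord_at i q)).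
  { intros i; apply (ex_derive_ext_loc _ _ _ (locally_coord_line i q _ Eq)).
    apply (ex_derive_plus (V := R_NormedModule)); apply ex_derive_scal;
      apply (smooth2_ex_derive U); auto using smooth2_iter. }
  split; [|exact (conj (D true) (D false))].
  apply (continuous_ext_loc _ _ _ Eq).
  apply (continuous_plus (fun z => a * iter_pd2 l g z) (fun z => b * iter_pd2 l h z)).
  - apply (continuous_mult (fun _ => a) (iter_pd2 l g)); [apply continuous_const|].
    apply (smooth2_continuous U); auto using smooth2_iter.
  - apply (continuous_mult (fun _ => b) (iter_pd2 l h)); [apply continuous_const|].
    apply (smooth2_continuous U); auto using smooth2_iter.
Qed.

Lemma smooth2_continuity_2d U g q : smooth2 U g -> U q ->
  continuity_2d_pt (fun u v => g (u, v)) (fst q) (snd q).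
Proof.
  intros Hg Hq; apply continuity_2d_pt_filterlim; destruct q as [x y].
  eapply filterlim_ext; [|exact (smooth2_continuous U g _ Hg Hq)].
  now intros [u v].
Qed.

Lemma smooth2_schwarz U g q : open U -> smooth2 U g -> U q ->
  pd2 false (pd2 true g) q = pd2 true (pd2 false g) q.
Proof.
  intros HU Hg Hq.
  assert (Hloc : locally_2d (fun u v => U (u, v)) (fst q) (snd q)).
  { apply locally_2d_locally; destruct q as [x y].
    eapply filter_imp; [|exact (HU _ Hq)]; now intros [u v]. }
  destruct q as [x y]; symmetry; unfold pd2; simpl; apply (Schwarz (fun u v => g (u, v))).
  - refine (locally_2d_impl _ _ _ _ (locally_2d_forall _ _ _ _) Hloc); intros u v Huv.
    exact (conj (smooth2_ex_derive U true g _ Hg Huv)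
          (conj (smooth2_ex_derive U false g _ Hg Huv)
          (conj (smooth2_ex_derive U true (pd2 false g) _ (smooth2_pd2 U false g Hg) Huv)
                (smooth2_ex_derive U false (pd2 true g) _ (smooth2_pd2 U true g Hg) Huv)))).
  - exact (smooth2_continuity_2d U (pd2 true (pd2 false g)) (x, y)
             (smooth2_iter U (true :: false :: nil) g Hg) Hq).
  - exact (smooth2_continuity_2d U (pd2 false (pd2 true g)) (x, y)
             (smooth2_iter U (false :: true :: nil) g Hg) Hq).
Qed.

Lemma smooth2_differentiable P g z : open P -> smooth2 P g -> P z ->
  differentiable_pt_lim (fun u v => g (u, v)) (fst z) (snd z) (pd2 true g z) (pd2 false g z).
Proof.
  intros HP Hg Hz; destruct z as [x y]; apply filterdiff_differentiable_pt_lim.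
  eapply filterdiff_ext_lin.
  - apply (is_derive_filterdiff (fun u v => g (u, v)) x y (fun u v => pd2 true g (u, v))).
    + eapply filter_imp; [|exact (HP _ Hz)]; intros [u v] Huv.
      exact (smooth2_is_pd2 P true g _ Hg Huv).
    + exact (smooth2_is_pd2 P false g _ Hg Hz).
    + eapply continuous_ext;
        [|exact (smooth2_continuous P (pd2 true g) _ (smooth2_pd2 P true g Hg) Hz)].
      now intros [u v].
  - intros [u v]; simpl; unfold plus, scal, mult; simpl; unfold mult; simpl; ring.
Qed.

Lemma is_pd2_comp P g (H : R2 -> R2) i q d1 d2 : open P -> smooth2 P g -> P (H q) ->
  is_pd2 i (fun z => fst (H z)) q d1 -> is_pd2 i (fun z => snd (H z)) q d2 ->
  is_pd2 i (fun z => g (H z)) q (pd2 true g (H q) * d1 + pd2 false g (H q) * d2).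
Proof.
  intros HP Hg HPq H1 H2.
  pose proof (smooth2_differentiable P g (H q) HP Hg HPq) as Hd.
  apply is_derive_Reals in H1; apply is_derive_Reals in H2.
  rewrite <- (coord_line_at i q) in Hd at 1 2.
  apply is_derive_Reals,
    (derivable_pt_lim_ext (fun s => g (fst (H (coord_line i q s)), snd (H (coord_line i q s))))).
  { intros s; now rewrite <- surjective_pairing. }
  exact (derivable_pt_lim_comp_2d (fun u v => g (u, v)) _ _ _ _ _ _ _ Hd H1 H2).
Qed.

Lemma is_derive_shift (F : R -> R) x l : is_derive F x l -> is_derive (fun s => F (x + s)) 0 l.
Proof.
  intros H; rewrite <- (Rplus_0_r x) in H.
  replace l with (scal 1 l) by (unfold scal; simpl; unfold mult; simpl; ring).
  apply (is_derive_comp F (fun s => x + s) 0 _ _ H); auto_derive; auto; ring.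
Qed.

Lemma smooth2_continuous_comp P g (H : R2 -> R2) q : smooth2 P g -> P (H q) ->
  continuous (fun z => fst (H z)) q -> continuous (fun z => snd (H z)) q ->
  continuous (fun z => g (H z)) q.
Proof.
  intros Hg HPq H1 H2.
  apply (continuous_ext (fun z => g (fst (H z), snd (H z))));
    [intros; now rewrite <- surjective_pairing|].
  apply (continuous_comp_2 _ _ (fun u v => g (u, v)) q H1 H2).
  rewrite <- surjective_pairing.
  eapply continuous_ext; [|exact (smooth2_continuous P g _ Hg HPq)]; now intros [u v].
Qed.

(* The coordinate form of d(mu dh2 - lam dh1) = 0. *)
Lemma pd2_curl U g lam mu h1 h2 q (dmu : bool -> R) :
  open U -> U q -> smooth2 U g -> smooth2 U lam -> smooth2 U h1 -> smooth2 U h2 ->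
  (forall i, is_pd2 i mu q (dmu i)) ->
  (forall i z, U z -> pd2 i g z = mu z * pd2 i h2 z - lam z * pd2 i h1 z) ->
  pd2 false lam q * pd2 true h1 q - pd2 true lam q * pd2 false h1 q
  = dmu false * pd2 true h2 q - dmu true * pd2 false h2 q.
Proof.
  intros HU Hq Hg Hlam Hh1 Hh2 Hmu Eg.
  assert (D : forall i j, pd2 j (pd2 i g) q
    = dmu j * pd2 i h2 q + mu q * pd2 j (pd2 i h2) q
      - (pd2 j lam q * pd2 i h1 q + lam q * pd2 j (pd2 i h1) q)).
  { intros i j; rewrite (pd2_ext_on U j _ _ q HU Hq (Eg i)).
    apply is_pd2_unique, is_pd2_minus; apply is_pd2_mult; auto;
      apply (smooth2_is_pd2 U); auto using smooth2_pd2. }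
  pose proof (D true false) as Dtf; pose proof (D false true) as Dft.
  rewrite (smooth2_schwarz U g q), (smooth2_schwarz U h1 q), (smooth2_schwarz U h2 q) in Dtf
    by assumption.
  lra.
Qed.

(* {A <> 0} together with the interior of {A = 0} is dense in U. *)
Lemma continuous_eq0_of_dense {T : UniformSpace} (U : T -> Prop) (A G : T -> R) q :
  open U -> U q -> continuous G q ->
  (forall z, U z -> A z <> 0 -> G z = 0) ->
  (forall z, locally z (fun w => U w /\ A w = 0) -> G z = 0) -> G q = 0.
Proof.
  intros HU Hq HG Hoff Hint.
  destruct (Req_dec (G q) 0) as [|Hne]; [assumption|].
  apply Hint; apply (filter_imp (fun w => U w /\ G w <> 0)).
  - intros w [Hw HGw]; split; [exact Hw|].
    destruct (Req_dec (A w) 0) as [|HA]; [assumption|].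
    now destruct (HGw (Hoff w Hw HA)).
  - exact (filter_and _ _ (HU q Hq) (HG _ (open_neq 0 (G q) Hne))).
Qed.

(** * The metric g_f^eps and its Levi-Civita connection *)

Lemma pd3_gmet_const eps f k i j p : (i <> 2 \/ j <> 2)%nat ->
  pd3 k (fun p' => gmet eps f p' i j) p = 0.
Proof.
  intros Hij; unfold pd3.
  rewrite (Derive_ext _ (fun _ => gmet eps f p i j)); [apply Derive_const|]; intros s.
  destruct i as [|[|[|i]]], j as [|[|[|j]]]; try reflexivity; now destruct Hij.
Qed.

Lemma pd3_gmet_t eps f i j p : pd3 0 (fun p' => gmet eps f p' i j) p = 0.
Proof.
  unfold pd3.
  rewrite (Derive_ext _ (fun _ => gmet eps f p i j)); [apply Derive_const|]; intros s.
  now destruct i as [|[|[|i]]], j as [|[|[|j]]].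
Qed.

Lemma pd3_gmet_x_yy eps f (p : R3) : ex_derive (fun s : R => f (s, snd (snd p))) (fst (snd p)) ->
  pd3 1 (fun p' => gmet eps f p' 2 2) p = pd2 true f (snd p).
Proof.
  intros Hf; apply is_derive_unique, (is_derive_shift (fun s => f (s, snd (snd p)))).
  exact (Derive_correct _ _ Hf).
Qed.

Lemma christoffel_y eps f p i j : christoffel eps f p 2 i j = 0.
Proof.
  unfold christoffel, sum3; simpl ginv.
  rewrite pd3_gmet_t, !(pd3_gmet_const eps f _ _ 0) by (right; discriminate).
  ring.
Qed.

Lemma christoffel_x eps f p i j :
  christoffel eps f p 1 i j = - / 2 * / eps * pd3 1 (fun p' => gmet eps f p' i j) p.
Proof.
  unfold christoffel, sum3; simpl ginv.
  rewrite !(pd3_gmet_const eps f _ _ 1) by (right; discriminate).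
  ring.
Qed.

Lemma covD_y eps f X V a b q :
  covD eps f X V a b q 2%nat = Derive (fun s => V (fst q + s * a, snd q + s * b) 2%nat) 0.
Proof. unfold covD, sum3; rewrite !christoffel_y; ring. Qed.

Lemma covD_x eps f X V a b q :
  covD eps f X V a b q 1%nat = Derive (fun s => V (fst q + s * a, snd q + s * b) 1%nat) 0
    - / 2 * / eps * pd3 1 (fun p => gmet eps f p 2 2) (X q) * tang X a b q 2%nat * V q 2%nat.
Proof.
  unfold covD, sum3; rewrite !christoffel_x.
  rewrite !(pd3_gmet_const eps f 1 0), !(pd3_gmet_const eps f 1 1),
    !(pd3_gmet_const eps f 1 2 0), !(pd3_gmet_const eps f 1 2 1)
    by (left + right; discriminate).
  ring.
Qed.

Definition dir_a (i : bool) : R := if i then 1 else 0.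
Definition dir_b (i : bool) : R := if i then 0 else 1.

Lemma Derive_along_coord i h q l : is_pd2 i h q l ->
  Derive (fun s => h (fst q + s * dir_a i, snd q + s * dir_b i)) 0 = l.
Proof.
  intros Hh; apply is_derive_unique.
  apply (is_derive_ext (fun s => h (coord_line i q (coord_at i q + s)))).
  { intros s; destruct i, q; simpl; unfold dir_a, dir_b; do 2 f_equal; ring. }
  exact (is_derive_shift _ _ _ Hh).
Qed.

Lemma tang_coord X i q k : tang X (dir_a i) (dir_b i) q k = pd2 i (Xc X k) q.
Proof. destruct i; unfold tang, Xu, Xw, dir_a, dir_b; ring. Qed.

(** * Pointwise linear algebra of g_f^eps *)

Definition ip (eps phi : R) (a b : vec3) : R :=
  a 0%nat * b 2%nat + a 2%nat * b 0%nat + eps * a 1%nat * b 1%nat + phi * a 2%nat * b 2%nat.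

Definition gram2 (eps phi : R) (p r : vec3) : R :=
  ip eps phi p p * ip eps phi r r - ip eps phi p r * ip eps phi p r.

Definition det3 (a b c : vec3) : R :=
  a 0%nat * (b 1%nat * c 2%nat - b 2%nat * c 1%nat)
  - a 1%nat * (b 0%nat * c 2%nat - b 2%nat * c 0%nat)
  + a 2%nat * (b 0%nat * c 1%nat - b 1%nat * c 0%nat).

Lemma gdot_ip eps f p a b : gdot eps f p a b = ip eps (f (snd p)) a b.
Proof. unfold gdot, sum3, gmet, ip; simpl; ring. Qed.

Lemma ip_comm eps phi a b : ip eps phi a b = ip eps phi b a.
Proof. unfold ip; ring. Qed.

Lemma ip_lin_l eps phi x y (a b c : vec3) :
  ip eps phi (fun k => x * a k + y * b k) c = x * ip eps phi a c + y * ip eps phi b c.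
Proof. unfold ip; ring. Qed.

Lemma hdet_gram2 eps f X q : hdet eps f X q = gram2 eps (f (snd (X q))) (Xu X q) (Xw X q).
Proof. unfold hdet, h11, h12, h22, gram2; now rewrite !gdot_ip. Qed.

Lemma det3_sq eps phi p r v : ip eps phi v p = 0 -> ip eps phi v r = 0 ->
  det3 p r v ^ 2 * (- eps) = gram2 eps phi p r * ip eps phi v v.
Proof.
  intros Hp Hr.
  assert (G : det3 p r v ^ 2 * (- eps)
    = gram2 eps phi p r * ip eps phi v v
      - ip eps phi v p * (ip eps phi v p * ip eps phi r r - ip eps phi p r * ip eps phi v r)
      + ip eps phi v r * (ip eps phi p r * ip eps phi v p - ip eps phi p p * ip eps phi v r))
    by (unfold det3, gram2, ip; ring).
  rewrite G, Hp, Hr; ring.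
Qed.

Lemma ip_eq0_of_frame eps phi p r v w z : eps <> 0 ->
  ip eps phi v p = 0 -> ip eps phi v r = 0 -> ip eps phi v v <> 0 -> gram2 eps phi p r <> 0 ->
  ip eps phi w p = 0 -> ip eps phi w r = 0 -> ip eps phi w v = 0 -> ip eps phi w z = 0.
Proof.
  intros He Hp Hr Hv Hg Hwp Hwr Hwv.
  assert (Hdet : det3 p r v <> 0).
  { intros D; pose proof (det3_sq eps phi p r v Hp Hr) as S; rewrite D in S.
    apply (Rmult_integral_contrapositive _ _ (conj Hg Hv)); rewrite <- S; ring. }
  apply (Rmult_eq_reg_l (det3 p r v)); [|exact Hdet].
  transitivity (det3 z r v * ip eps phi w p + det3 p z v * ip eps phi w r
                + det3 p r z * ip eps phi w v); [unfold det3, ip; ring|].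
  rewrite Hwp, Hwr, Hwv; ring.
Qed.

(* As [ip eps phi (1,0,0) z = z 2], [w] is the orthogonal projection of [K (1,0,0)]
   onto the plane spanned by [p] and [r]. *)
Lemma ip_tangential_projection eps phi p r v w K z : eps <> 0 ->
  ip eps phi v p = 0 -> ip eps phi v r = 0 -> ip eps phi v v <> 0 -> gram2 eps phi p r <> 0 ->
  ip eps phi w p = K * p 2%nat -> ip eps phi w r = K * r 2%nat -> ip eps phi w v = 0 ->
  ip eps phi w z = K * (z 2%nat - v 2%nat * ip eps phi v z / ip eps phi v v).
Proof.
  intros He Hp Hr Hv Hg Hwp Hwr Hwv.
  set (dt := fun k : nat => match k with 0%nat => 1 | _ => 0 end).
  set (c := v 2%nat / ip eps phi v v).
  assert (Hdt : forall a, ip eps phi dt a = a 2%nat) by (intros a; unfold ip, dt; ring).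
  set (w' := fun k => 1 * w k + (- K) * (1 * dt k + (- c) * v k)).
  assert (E : forall a, ip eps phi w' a = ip eps phi w a - K * (a 2%nat - c * ip eps phi v a)).
  { intros a; unfold w'; rewrite ip_lin_l, (ip_lin_l _ _ 1 (- c)), Hdt; ring. }
  assert (H0 : ip eps phi w' z = 0).
  { apply (ip_eq0_of_frame eps phi p r v); auto; rewrite E.
    - rewrite Hwp, Hp; ring.
    - rewrite Hwr, Hr; ring.
    - rewrite Hwv; unfold c; field; exact Hv. }
  rewrite E in H0; apply Rminus_diag_uniq; rewrite <- H0; unfold c, Rdiv; ring.
Qed.

Lemma minor_xy_neq0 eps phi v p r :
  ip eps phi v p = 0 -> ip eps phi v r = 0 -> v 2%nat <> 0 -> gram2 eps phi p r <> 0 ->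
  p 1%nat * r 2%nat - p 2%nat * r 1%nat <> 0.
Proof.
  intros Hp Hr Hv Hg Hm; apply Hg.
  set (m_xy := p 1%nat * r 2%nat - p 2%nat * r 1%nat) in Hm.
  set (m_tx := p 0%nat * r 1%nat - p 1%nat * r 0%nat).
  set (m_yt := p 2%nat * r 0%nat - p 0%nat * r 2%nat).
  assert (Etx : v 2%nat * m_tx = (v 0%nat + phi * v 2%nat) * m_xy
                 - p 1%nat * ip eps phi v r + r 1%nat * ip eps phi v p)
    by (unfold m_tx, m_xy, ip; ring).
  assert (Eyt : v 2%nat * m_yt = eps * v 1%nat * m_xy
                 + p 2%nat * ip eps phi v r - r 2%nat * ip eps phi v p)
    by (unfold m_yt, m_xy, ip; ring).
  rewrite Hp, Hr, Hm in Etx, Eyt.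
  assert (Htx : m_tx = 0) by (apply (Rmult_eq_reg_l (v 2%nat)); auto; lra).
  assert (Hyt : m_yt = 0) by (apply (Rmult_eq_reg_l (v 2%nat)); auto; lra).
  transitivity (eps * phi * m_xy ^ 2 - m_yt ^ 2 - 2 * eps * m_xy * m_tx);
    [unfold gram2, ip, m_xy, m_yt, m_tx; ring | rewrite Hm, Htx, Hyt; ring].
Qed.

Lemma gram2_eq0_of_y_free eps phi v p r :
  eps * v 1%nat <> 0 -> v 2%nat = 0 -> p 2%nat = 0 -> r 2%nat = 0 ->
  ip eps phi v p = 0 -> ip eps phi v r = 0 -> gram2 eps phi p r = 0.
Proof.
  intros Hv1 Hv2 Hp2 Hr2 Hp Hr.
  assert (Hp1 : p 1%nat = 0).
  { apply (Rmult_eq_reg_l (eps * v 1%nat)); [|exact Hv1].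
    rewrite Rmult_0_r, <- Hp; unfold ip; rewrite Hv2, Hp2; ring. }
  assert (Hr1 : r 1%nat = 0).
  { apply (Rmult_eq_reg_l (eps * v 1%nat)); [|exact Hv1].
    rewrite Rmult_0_r, <- Hr; unfold ip; rewrite Hv2, Hr2; ring. }
  unfold gram2, ip; rewrite Hp1, Hp2, Hr1, Hr2; ring.
Qed.

Lemma gdot_grad_tangent eps f X lam q : hdet eps f X q <> 0 ->
  gdot eps f (X q) (grad eps f X lam q) (Xu X q) = pd2 true lam q /\
  gdot eps f (X q) (grad eps f X lam q) (Xw X q) = pd2 false lam q.
Proof.
  rewrite hdet_gram2; unfold gram2; intros Hd.
  unfold grad, hdet, h11, h12, h22; rewrite !gdot_ip, !ip_lin_l, (ip_comm _ _ (Xw X q) (Xu X q)).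
  split; field; exact Hd.
Qed.

Lemma gdot_grad_normal eps f X lam q (V : vec3) :
  gdot eps f (X q) V (Xu X q) = 0 -> gdot eps f (X q) V (Xw X q) = 0 ->
  gdot eps f (X q) (grad eps f X lam q) V = 0.
Proof.
  rewrite !gdot_ip; intros Hu Hw.
  unfold grad; rewrite ip_lin_l, (ip_comm _ _ (Xu X q)), (ip_comm _ _ (Xw X q)), Hu, Hw; ring.
Qed.

Lemma inv_sqrt2_sq : (/ sqrt 2) ^ 2 = / 2.
Proof. rewrite pow_inv, <- Rsqr_pow2, Rsqr_sqrt; lra. Qed.

Definition frame_y (v2 v3 : R2 -> R) (q : R2) : R := (v2 q - v3 q) / sqrt 2.

Lemma frame_field_x f X v1 v2 v3 q : frame_field f X v1 v2 v3 q 1%nat = v1 q.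
Proof. unfold frame_field, e1, e2, e3; ring. Qed.

Lemma frame_field_y f X v1 v2 v3 q : frame_field f X v1 v2 v3 q 2%nat = frame_y v2 v3 q.
Proof. unfold frame_field, frame_y, e1, e2, e3, Rdiv; ring. Qed.

Lemma smooth2_frame_y U v2 v3 : open U -> smooth2 U v2 -> smooth2 U v3 -> smooth2 U (frame_y v2 v3).
Proof.
  intros HU H2 H3.
  replace (frame_y v2 v3) with (fun q => / sqrt 2 * v2 q + (- / sqrt 2) * v3 q)
    by (apply functional_extensionality; intros q; unfold frame_y, Rdiv; ring).
  now apply smooth2_lin.
Qed.

Lemma gdot_frame_field_e1 eps f X v1 v2 v3 q :
  gdot eps f (X q) (frame_field f X v1 v2 v3 q) (e1 (X q)) = eps * v1 q.
Proof. rewrite gdot_ip; unfold frame_field, e1, e2, e3, ip; simpl; ring. Qed.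

Lemma gdot_frame_field_e2 eps f X v1 v2 v3 q :
  gdot eps f (X q) (frame_field f X v1 v2 v3 q) (e2 f (X q)) = v2 q.
Proof.
  rewrite gdot_ip; unfold frame_field, e1, e2, e3, ip, Rdiv; simpl.
  rewrite ?Rinv_mult; ring_simplify; rewrite inv_sqrt2_sq; field.
Qed.

Lemma gdot_frame_field_e3 eps f X v1 v2 v3 q :
  gdot eps f (X q) (frame_field f X v1 v2 v3 q) (e3 f (X q)) = - v3 q.
Proof.
  rewrite gdot_ip; unfold frame_field, e1, e2, e3, ip, Rdiv; simpl.
  rewrite ?Rinv_mult; ring_simplify; rewrite inv_sqrt2_sq; field.
Qed.

Lemma gdot_frame_field_self eps f X v1 v2 v3 q :
  gdot eps f (X q) (frame_field f X v1 v2 v3 q) (frame_field f X v1 v2 v3 q)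
  = eps * v1 q ^ 2 + v2 q ^ 2 - v3 q ^ 2.
Proof.
  rewrite gdot_ip; unfold frame_field, e1, e2, e3, ip, Rdiv; simpl.
  rewrite ?Rinv_mult; ring_simplify; rewrite inv_sqrt2_sq; field.
Qed.

(** * Totally umbilical surfaces *)

Section TotallyUmbilical.

Variables (eps : R) (f : R2 -> R) (P U : R2 -> Prop) (X : R2 -> R3) (v1 v2 v3 lam : R2 -> R).

Local Notation V := (frame_field f X v1 v2 v3).
Local Notation Vy := (frame_y v2 v3).

Hypothesis eps_neq0 : eps <> 0.
Hypothesis open_P : open P.
Hypothesis smooth_f : smooth2 P f.
Hypothesis open_U : open U.
Hypothesis X_in_P : forall q, U q -> P (snd (X q)).
Hypothesis smooth_X : forall k, smooth2 U (Xc X k).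
Hypothesis hdet_neq0 : forall q, U q -> hdet eps f X q <> 0.
Hypotheses (smooth_v1 : smooth2 U v1) (smooth_v2 : smooth2 U v2) (smooth_v3 : smooth2 U v3).
Hypothesis smooth_lam : smooth2 U lam.
Hypothesis V_normal : forall q, U q ->
  gdot eps f (X q) (V q) (Xu X q) = 0 /\ gdot eps f (X q) (V q) (Xw X q) = 0.
Hypothesis V_nonnull : forall q, U q -> gdot eps f (X q) (V q) (V q) <> 0.
Hypothesis v1_neq0 : forall q, U q -> v1 q <> 0.
Hypothesis umbilic : forall q a b k, U q -> - covD eps f X V a b q k = lam q * tang X a b q k.

Definition dlam_dy (q : R2) : R := - / 2 * / eps * fxx f (snd (X q)) * Vy q.

Let smooth_Vy : smooth2 U Vy := smooth2_frame_y U v2 v3 open_U smooth_v2 smooth_v3.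

Lemma umbilic_y i z : U z -> pd2 i Vy z = - lam z * pd2 i (Xc X 2) z.
Proof.
  intros Hz; pose proof (umbilic z (dir_a i) (dir_b i) 2 Hz) as E.
  rewrite covD_y, tang_coord in E.
  rewrite (Derive_ext _ (fun s => Vy (fst z + s * dir_a i, snd z + s * dir_b i))) in E
    by (intros; apply frame_field_y).
  rewrite (Derive_along_coord i Vy z _ (smooth2_is_pd2 U i Vy z smooth_Vy Hz)) in E.
  lra.
Qed.

Lemma umbilic_x i z : U z -> pd2 i v1 z
  = / 2 * / eps * pd2 true f (snd (X z)) * Vy z * pd2 i (Xc X 2) z - lam z * pd2 i (Xc X 1) z.
Proof.
  intros Hz; pose proof (umbilic z (dir_a i) (dir_b i) 1 Hz) as E.
  rewrite covD_x, !tang_coord, frame_field_y in E.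
  rewrite (Derive_ext _ (fun s => v1 (fst z + s * dir_a i, snd z + s * dir_b i))) in E
    by (intros; apply frame_field_x).
  rewrite (Derive_along_coord i v1 z _ (smooth2_is_pd2 U i v1 z smooth_v1 Hz)) in E.
  rewrite pd3_gmet_x_yy in E by exact (smooth2_ex_derive P true f _ smooth_f (X_in_P z Hz)).
  rewrite <- E; ring.
Qed.

Lemma lam_curl_y q : U q ->
  pd2 false lam q * pd2 true (Xc X 2) q - pd2 true lam q * pd2 false (Xc X 2) q = 0.
Proof.
  intros Hq; transitivity (0 * pd2 true (Xc X 2) q - 0 * pd2 false (Xc X 2) q); [|ring].
  apply (pd2_curl U Vy lam (fun _ => 0) (Xc X 2) (Xc X 2) q (fun _ => 0)); auto using is_pd2_const.
  intros i z Hz; rewrite umbilic_y by exact Hz; ring.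
Qed.

Lemma lam_curl_x q : U q ->
  pd2 false lam q * pd2 true (Xc X 1) q - pd2 true lam q * pd2 false (Xc X 1) q
  = / 2 * / eps * fxx f (snd (X q)) * Vy q
    * (pd2 false (Xc X 1) q * pd2 true (Xc X 2) q - pd2 true (Xc X 1) q * pd2 false (Xc X 2) q).
Proof.
  intros Hq.
  set (dfx := fun i => pd2 true (pd2 true f) (snd (X q)) * pd2 i (Xc X 1) q
                       + pd2 false (pd2 true f) (snd (X q)) * pd2 i (Xc X 2) q).
  rewrite (pd2_curl U v1 lam (fun z => / 2 * / eps * pd2 true f (snd (X z)) * Vy z)
             (Xc X 1) (Xc X 2) q
             (fun i => / 2 * / eps * dfx i * Vy q
                       + / 2 * / eps * pd2 true f (snd (X q)) * pd2 i Vy q));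
    auto using umbilic_x.
  - rewrite !umbilic_y by exact Hq; unfold dfx, fxx; ring.
  - intros i; apply is_pd2_mult; [|exact (smooth2_is_pd2 U i Vy q smooth_Vy Hq)].
    apply is_pd2_scal, (is_pd2_comp P); auto using smooth2_pd2;
      exact (smooth2_is_pd2 U i _ q (smooth_X _) Hq).
Qed.

Lemma pd2_lam_of_Vy_neq0 i q : U q -> Vy q <> 0 -> pd2 i lam q = dlam_dy q * pd2 i (Xc X 2) q.
Proof.
  intros Hq Hy.
  enough (pd2 true lam q = dlam_dy q * pd2 true (Xc X 2) q /\
          pd2 false lam q = dlam_dy q * pd2 false (Xc X 2) q) by (destruct i; tauto).
  destruct (V_normal q Hq) as [Nu Nw]; rewrite gdot_ip in Nu, Nw.
  pose proof (minor_xy_neq0 eps (f (snd (X q))) (V q) (Xu X q) (Xw X q) Nu Nw) as Hm.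
  rewrite frame_field_y, <- hdet_gram2 in Hm; specialize (Hm Hy (hdet_neq0 q Hq)).
  pose proof (lam_curl_x q Hq) as Cx; pose proof (lam_curl_y q Hq) as Cy.
  unfold Xu, Xw, dlam_dy in *.
  set (xu := pd2 true (Xc X 1) q) in *; set (xw := pd2 false (Xc X 1) q) in *.
  set (yu := pd2 true (Xc X 2) q) in *; set (yw := pd2 false (Xc X 2) q) in *.
  set (lu := pd2 true lam q) in *; set (lw := pd2 false lam q) in *.
  split; refine (Rmult_eq_reg_r _ _ _ _ Hm).
  - transitivity (yu * (lw * xu - lu * xw) - xu * (lw * yu - lu * yw)); [ring|].
    rewrite Cx, Cy; ring.
  - transitivity (yw * (lw * xu - lu * xw) - xw * (lw * yu - lu * yw)); [ring|].
    rewrite Cx, Cy; ring.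
Qed.

Lemma lam_eq0_of_Vy_locally0 q : locally q (fun z => U z /\ Vy z = 0) -> lam q = 0.
Proof.
  intros Hloc; destruct (locally_singleton _ _ Hloc) as [Hq Hy].
  assert (Hly : forall i, lam q * pd2 i (Xc X 2) q = 0).
  { intros i.
    assert (dVy : pd2 i Vy q = 0)
      by (apply pd2_locally0; exact (filter_imp _ _ (fun z H => proj2 H) Hloc)).
    rewrite umbilic_y in dVy by exact Hq; lra. }
  destruct (Req_dec (lam q) 0) as [|Hl]; [assumption|exfalso].
  destruct (V_normal q Hq) as [Nu Nw]; rewrite gdot_ip in Nu, Nw.
  apply (hdet_neq0 q Hq); rewrite hdet_gram2.
  apply (gram2_eq0_of_y_free eps _ (V q)); auto.
  - rewrite frame_field_x; apply Rmult_integral_contrapositive; auto.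
  - now rewrite frame_field_y.
  - destruct (Rmult_integral _ _ (Hly true)); tauto.
  - destruct (Rmult_integral _ _ (Hly false)); tauto.
Qed.

Lemma pd2_lam i q : U q -> pd2 i lam q = dlam_dy q * pd2 i (Xc X 2) q.
Proof.
  intros Hq; apply Rminus_diag_uniq.
  apply (continuous_eq0_of_dense U Vy (fun z => pd2 i lam z - dlam_dy z * pd2 i (Xc X 2) z)); auto.
  - apply (continuous_minus (pd2 i lam) (fun z => dlam_dy z * pd2 i (Xc X 2) z)).
    + apply (smooth2_continuous U); auto using smooth2_pd2.
    + apply (continuous_mult dlam_dy (pd2 i (Xc X 2))).
      * apply (continuous_mult (fun z => - / 2 * / eps * fxx f (snd (X z))) Vy).
        -- apply (continuous_mult (fun _ => - / 2 * / eps) (fun z => fxx f (snd (X z))));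
             [apply continuous_const|].
           apply (smooth2_continuous_comp P); auto.
           ++ exact (smooth2_iter P (true :: true :: nil) f smooth_f).
           ++ exact (smooth2_continuous U (Xc X 1) q (smooth_X 1) Hq).
           ++ exact (smooth2_continuous U (Xc X 2) q (smooth_X 2) Hq).
        -- apply (smooth2_continuous U); auto.
      * apply (smooth2_continuous U); auto using smooth2_pd2.
  - intros z Hz Hy; rewrite pd2_lam_of_Vy_neq0 by auto; ring.
  - intros z Hloc; destruct (locally_singleton _ _ Hloc) as [_ Hy].
    rewrite (pd2_locally0 i lam z).
    + unfold dlam_dy; rewrite Hy; ring.
    + exact (filter_imp _ _ lam_eq0_of_Vy_locally0 (locally_locally _ _ Hloc)).
Qed.

Lemma gdot_grad_lam q Z : U q ->
  gdot eps f (X q) (grad eps f X lam q) Z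
  = dlam_dy q * (Z 2%nat - Vy q * gdot eps f (X q) (V q) Z / gdot eps f (X q) (V q) (V q)).
Proof.
  intros Hq.
  destruct (gdot_grad_tangent eps f X lam q (hdet_neq0 q Hq)) as [Gu Gw].
  pose proof (V_normal q Hq) as [Nu Nw]; pose proof (V_nonnull q Hq) as Nv.
  pose proof (gdot_grad_normal eps f X lam q (V q) Nu Nw) as Gv.
  pose proof (hdet_neq0 q Hq) as Hd; rewrite hdet_gram2 in Hd.
  repeat rewrite gdot_ip in *; rewrite <- (frame_field_y f X v1).
  apply ip_tangential_projection with (Xu X q) (Xw X q); auto.
  - rewrite Gu; apply pd2_lam, Hq.
  - rewrite Gw; apply pd2_lam, Hq.
Qed.

End TotallyUmbilical.

Lemma open_proj_yz (N : R3 -> Prop) : open N -> open (fun q => exists t, N (t, q)).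
Proof.
  intros HN q [t Ht]; destruct (HN _ Ht) as [e He]; exists e; intros q' Hq'.
  exists t; apply He; exact (conj (ball_center _ _) Hq').
Qed.

Lemma frame_gradient_identities eps delta F v1 v2 v3 :
  (eps = 1 \/ eps = -1) -> (delta = 1 \/ delta = -1) -> eps * v1 ^ 2 + v2 ^ 2 - v3 ^ 2 = delta ->
  let K := - / 2 * / eps * F * ((v2 - v3) / sqrt 2) in
  K * (0 - (v2 - v3) / sqrt 2 * (eps * v1) / delta) = delta * (F * v1 * (v2 - v3) ^ 2 / 4) /\
  K * (1 / sqrt 2 - (v2 - v3) / sqrt 2 * v2 / delta)
    = delta * (F * (v3 - v2) / 4 * (v1 ^ 2 + eps * v3 * (v2 - v3))) /\
  K * (- (1 / sqrt 2) - (v2 - v3) / sqrt 2 * - v3 / delta)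
    = delta * (F * (v2 - v3) / 4 * (v1 ^ 2 + eps * v2 * (v2 - v3))).
Proof.
  intros He Hd Hn K; unfold K, Rdiv.
  assert (Hv1 : v1 ^ 2 = eps * (delta - v2 ^ 2 + v3 ^ 2)) by (destruct He; subst; lra).
  generalize (/ sqrt 2) inv_sqrt2_sq; intros s Hs.
  destruct He, Hd; subst; repeat split; ring_simplify; rewrite ?Hs; try rewrite Hv1; field.
Qed.

Theorem mainTheorem2
  (eps delta : R) (N : R3 -> Prop) (f : R2 -> R)
  (U : R2 -> Prop) (X : R2 -> R3) (v1 v2 v3 lam : R2 -> R) :
  (eps = 1 \/ eps = -1) ->
  (delta = 1 \/ delta = -1) ->
  open N ->
  smooth2 (fun q => exists t, N (t, q)) f ->
  open U ->
  (forall q, U q -> N (X q)) ->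
  (forall k, smooth2 U (Xc X k)) ->
  (* non-degenerate induced metric (Riemannian or Lorentzian) *)
  (forall q, U q -> hdet eps f X q <> 0) ->
  smooth2 U v1 -> smooth2 U v2 -> smooth2 U v3 -> smooth2 U lam ->
  (* V = v1 e1 + v2 e2 + v3 e3 is a unit normal *)
  (forall q, U q ->
     gdot eps f (X q) (frame_field f X v1 v2 v3 q) (Xu X q) = 0 /\
     gdot eps f (X q) (frame_field f X v1 v2 v3 q) (Xw X q) = 0) ->
  (forall q, U q -> eps * v1 q ^ 2 + v2 q ^ 2 - v3 q ^ 2 = delta) ->
  (forall q, U q -> v1 q <> 0) ->
  (* totally umbilical: - nabla-bar_T V = lam T for every tangent T *)
  (forall q a b k, U q ->
     - covD eps f X (frame_field f X v1 v2 v3) a b q k = lam q * tang X a b q k) ->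
  forall q, U q ->
    let p := X q in
    let fx2 := fxx f (snd p) in
    gdot eps f p (grad eps f X lam q) (e1 p)
      = delta * (fx2 * v1 q * (v2 q - v3 q) ^ 2 / 4) /\
    gdot eps f p (grad eps f X lam q) (e2 f p)
      = delta * (fx2 * (v3 q - v2 q) / 4
                 * (v1 q ^ 2 + eps * v3 q * (v2 q - v3 q))) /\
    gdot eps f p (grad eps f X lam q) (e3 f p)
      = delta * (fx2 * (v2 q - v3 q) / 4
                 * (v1 q ^ 2 + eps * v2 q * (v2 q - v3 q))).
Proof.
  intros Heps Hdel HN Hf HU HXN HX Hdet Hv1 Hv2 Hv3 Hlam Hort Hnorm Hnz Hum q Hq p fx2.
  assert (eps_neq0 : eps <> 0) by (destruct Heps; lra).
  assert (HXP : forall z, U z -> exists t, N (t, snd (X z)))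
    by (intros z Hz; exists (fst (X z)); rewrite <- surjective_pairing; auto).
  assert (HV : forall z, U z ->
    gdot eps f (X z) (frame_field f X v1 v2 v3 z) (frame_field f X v1 v2 v3 z) <> 0)
    by (intros z Hz; rewrite gdot_frame_field_self, Hnorm by exact Hz; destruct Hdel; lra).
  unfold p, fx2.
  rewrite !(gdot_grad_lam eps f (fun q => exists t, N (t, q)) U X v1 v2 v3 lam)
    by auto using open_proj_yz.
  rewrite gdot_frame_field_e1, gdot_frame_field_e2, gdot_frame_field_e3,
    gdot_frame_field_self, Hnorm by exact Hq.
  exact (frame_gradient_identities eps delta _ _ _ _ Heps Hdel (Hnorm q Hq)).
Qed.
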